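(* Let $m\geq 1$, $n\geq 3$, and let $i,j\in V$. If $P$ is a walk of length $2n-1$ in $D^m_n$ from $i$ to $j$, then exactly one of the following occurs: (a) $i=1$ and $j=(k-1)(n-1)+n$ for some $k\in\{1,\ldots,m\}$, and $P=P_{1j}\circ C^s$ for some $s\in\{1,\ldots,m\}$, where $P_{1j}$ is the unique walk of length $n-1$ from $1$ to $j$; (b) $j=1$ and $i=(k-1)(n-1)+2$ for some $k\in\{1,\ldots,m\}$, and $P=C^s\circ P_{i1}$ for some $s\in\{1,\ldots,m\}$, where $P_{i1}$ is the unique walk of length $n-1$ from $i$ to $1$; (c) there exist $k,r\in\{1,\ldots,m\}$ and $\ell\in\{3,\ldots,n\}$ with $i=(k-1)(n-1)+\ell$ and $j=(r-1)(n-1)+(\ell-1)$, and $P=Q_{1j}\circ C^s\circ Q_{i1}$ for some $s\in\{1,\ldots,m\}$, where $Q_{i1}$ is the shortest walk from $i$ to $1$ and $Q_{1j}$ is the shortest walk from $1$ to $j$, and $Q_{1j}\circ Q_{i1}$ is the unique walk of length $n-1$ from $i$ to $j$.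
   Context: For integers $m\geq 1$, $n\geq 3$, the oriented Dutch windmill graph $D^m_n$ is the directed graph with vertex set $V=\{1,2,\ldots,m(n-1)+1\}$ whose directed edges $(a,b)$ are exactly: $(1,(k-1)(n-1)+2)$ for $k\in\{1,\ldots,m\}$; $((k-1)(n-1)+i,(k-1)(n-1)+i+1)$ for $k\in\{1,\ldots,m\}$ and $i\in\{2,\ldots,n-1\}$; and $((k-1)(n-1)+n,1)$ for $k\in\{1,\ldots,m\}$. A walk is a sequence of vertices $\langle v_1,\ldots,v_r\rangle$ in which each $(v_t,v_{t+1})$ is an edge; its length is $r-1$. For $k\in\{1,\ldots,m\}$, $C^k$ is the closed walk $\langle 1,(k-1)(n-1)+2,\ldots,(k-1)(n-1)+n,1\rangle$ of length $n$. If $P=\langle v_1,\ldots,v_r\rangle$ and $Q=\langle w_1,\ldots,w_s\rangle$ are walks with $w_1=v_r$, then $Q\circ P=\langle v_1,\ldots,v_r,w_2,\ldots,w_s\rangle$ (first traverse $P$, then $Q$). *)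

From mathcomp Require Import all_boot.
Set Implicit Arguments. Unset Strict Implicit. Unset Printing Implicit Defensive.

Definition inV (m n v : nat) : bool := (1 <= v) && (v <= m * (n - 1) + 1).

Definition edge (m n : nat) (a b : nat) : bool :=
  has (fun k =>
    [|| (a == 1) && (b == (k - 1) * (n - 1) + 2),
        has (fun i => (a == (k - 1) * (n - 1) + i) && (b == (k - 1) * (n - 1) + i + 1))
            (iota 2 (n - 2))
      | (a == (k - 1) * (n - 1) + n) && (b == 1)])
  (iota 1 m).

Definition is_walk (m n : nat) (P : seq nat) : bool :=
  if P is v :: s then path (edge m n) v s else false.

Definition wlen (P : seq nat) : nat := (size P).-1.

Definition walk_from_to (m n : nat) (P : seq nat) (i j : nat) : Prop :=
  is_walk m n P /\ head 0 P = i /\ last 0 P = j.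

Definition unique_walk_of_len (m n : nat) (P : seq nat) (i j L : nat) : Prop :=
  walk_from_to m n P i j /\ wlen P = L /\
  forall P', walk_from_to m n P' i j -> wlen P' = L -> P' = P.

Definition shortest_walk (m n : nat) (P : seq nat) (i j : nat) : Prop :=
  walk_from_to m n P i j /\
  forall P', walk_from_to m n P' i j -> wlen P <= wlen P'.

Definition Ccyc (n k : nat) : seq nat :=
  1 :: [seq (k - 1) * (n - 1) + t | t <- iota 2 (n - 1)] ++ [:: 1].

(* Q \o P : first traverse P, then Q (assuming head Q = last P) *)
Definition wcomp (Q P : seq nat) : seq nat := P ++ behead Q.

Definition exactly_one3 (A B C : Prop) : Prop :=
  (A /\ ~ B /\ ~ C) \/ (~ A /\ B /\ ~ C) \/ (~ A /\ ~ B /\ C).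

(* Every vertex other than the hub 1 has a single out-neighbour: position t < n of a
   blade leads to position t + 1, and position n leads back to the hub. So a walk from
   position t of a blade is forced until it reaches the hub after n - t + 1 steps, and a
   walk leaving the hub is determined by the blade it enters; in particular it cannot
   return to the hub in fewer than n steps. A walk of length 2n - 1 from position t
   therefore reaches the hub, goes once around some cycle C^c, and spends its last t - 2
   steps in some blade r, ending at position t - 1: this is (b) for t = 2 and (c) for
   t >= 3. From the hub it goes around some C^c and then runs down a blade to its last
   vertex, which is (a). The three cases are told apart by whether i and j are the hub. *)

From mathcomp Require Import all_boot zify.
Set Implicit Arguments. Unset Strict Implicit. Unset Printing Implicit Defensive.

Lemma exactly_one3_by (A B C : Prop) (b1 b2 : bool) :
  (A -> b1) -> (B -> ~~ b1 /\ b2) -> (C -> ~~ b1 /\ ~~ b2) ->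
  A \/ B \/ C -> exactly_one3 A B C.
Proof. by rewrite /exactly_one3; case: b1; case: b2; intuition. Qed.

(* Position t, 2 <= t <= n, of blade k; blade 0 aliases blade 1. *)
Definition blade_vertex (n k t : nat) : nat := (k - 1) * (n - 1) + t.

Definition blade_run (n k t L : nat) : seq nat := [seq blade_vertex n k u | u <- iota t L].

Lemma blade_vertex_ge n k t : t <= blade_vertex n k t.
Proof. exact: leq_addl. Qed.

Lemma blade_vertex_neq1 n k t : 2 <= t -> blade_vertex n k t != 1.
Proof. by move=> t_ge2; have := blade_vertex_ge n k t; lia. Qed.

Lemma blade_run_cons n k t L :
  blade_run n k t L.+1 = blade_vertex n k t :: blade_run n k t.+1 L.
Proof. by []. Qed.

Lemma last_blade_run n k t L :
  last (blade_vertex n k t) (blade_run n k t.+1 L) = blade_vertex n k (t + L).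
Proof.
elim: L t => [|L IH] t; first by rewrite addn0.
by rewrite blade_run_cons /= IH addSnnS.
Qed.

Lemma size_blade_run n k t L : size (blade_run n k t L) = L.
Proof. by rewrite size_map size_iota. Qed.

Lemma last_blade_run_gt0 n x k t L :
  0 < L -> last x (blade_run n k t L) = blade_vertex n k (t + L).-1.
Proof. by case: L => // L _; rewrite blade_run_cons /= last_blade_run addnS. Qed.

Lemma blade_vertex_inj n k k' t t' : 2 <= n -> 1 <= k -> 1 <= k' ->
  2 <= t <= n -> 2 <= t' <= n ->
  blade_vertex n k t = blade_vertex n k' t' -> k = k' /\ t = t'.
Proof.
rewrite /blade_vertex => n_ge2 k_gt0 k'_gt0 t_bound t'_bound e.
have n1_gt0 : 0 < n - 1 by lia.
have e' : (k - 1) * (n - 1) + (t - 2) = (k' - 1) * (n - 1) + (t' - 2) by lia.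
have small u : 2 <= u <= n -> u - 2 < n - 1 by lia.
have := congr1 (divn^~ (n - 1)) e'; have := congr1 (modn^~ (n - 1)) e'.
rewrite /= !modnMDl !divnMDl // !modn_small ?divn_small ?small //; lia.
Qed.

Section Windmill.

Variables m n : nat.
Hypothesis n_ge3 : 3 <= n.

Variant edge_spec (a b : nat) : Prop :=
  | EdgeEnter k of 1 <= k <= m & a = 1 & b = blade_vertex n k 2
  | EdgeStep k t of 1 <= k <= m & 2 <= t < n &
      a = blade_vertex n k t & b = blade_vertex n k t.+1
  | EdgeLeave k of 1 <= k <= m & a = blade_vertex n k n & b = 1.

Lemma edgeP a b : edge m n a b -> edge_spec a b.
Proof.
case/hasP=> k; rewrite mem_iota => k_bound.
case/or3P=> [/andP[/eqP-> /eqP->] | /hasP[t] | /andP[/eqP-> /eqP->]].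
- by apply: (@EdgeEnter _ _ k) => //; lia.
- rewrite mem_iota => t_bound /andP[/eqP-> /eqP->].
  by apply: (@EdgeStep _ _ k t); rewrite /blade_vertex; lia.
- by apply: (@EdgeLeave _ _ k) => //; lia.
Qed.

Lemma path_source a s : 0 < size s -> path (edge m n) a s ->
  a = 1 \/ exists k t, [/\ 1 <= k <= m, 2 <= t <= n & a = blade_vertex n k t].
Proof.
case: s => [//|b s] _ /andP[+ _].
case/edgeP=> [k _ -> _ | k t k_bound t_bound -> _ | k k_bound -> _]; first by left.
- by right; exists k, t; split => //; lia.
- by right; exists k, n; split => //; lia.
Qed.

Lemma edge_from_hub b : edge m n 1 b -> exists2 k, 1 <= k <= m & b = blade_vertex n k 2.
Proof.
case/edgeP=> [k k_bound _ -> | k t _ t_bound e _ | k _ e _]; first by exists k.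
- by have := blade_vertex_ge n k t; lia.
- by have := blade_vertex_ge n k n; lia.
Qed.

Lemma edge_along k t b : 1 <= k -> 2 <= t < n ->
  edge m n (blade_vertex n k t) b -> b = blade_vertex n k t.+1.
Proof.
move=> k_gt0 t_bound; case/edgeP=> [k' _ e _ | k' t' k'_bound t'_bound e -> | k' k'_bound e _].
- by have := blade_vertex_ge n k t; lia.
- by case/blade_vertex_inj: e => [|||||-> ->]; lia.
- by case/blade_vertex_inj: e; lia.
Qed.

Lemma edge_leave k b : 1 <= k -> edge m n (blade_vertex n k n) b -> b = 1.
Proof.
move=> k_gt0; case/edgeP=> [k' _ e _ | k' t' k'_bound t'_bound e _ | //].
- by have := blade_vertex_ge n k n; lia.
- by case/blade_vertex_inj: e; lia.
Qed.

Lemma blade_path_short k t s : 1 <= k -> 2 <= t <= n ->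
  path (edge m n) (blade_vertex n k t) s -> size s <= n - t ->
  s = blade_run n k t.+1 (size s).
Proof.
move=> k_gt0; elim: s t => [//|y s IH] t t_bound /= /andP[e p] s_small.
have ey : y = blade_vertex n k t.+1 by apply: edge_along e => //; lia.
rewrite ey in p *; rewrite blade_run_cons -IH //; lia.
Qed.

Lemma blade_path_exit k t s : 1 <= k -> 2 <= t <= n ->
  path (edge m n) (blade_vertex n k t) s -> n - t < size s ->
  exists2 s', s = blade_run n k t.+1 (n - t) ++ 1 :: s' & path (edge m n) 1 s'.
Proof.
move=> k_gt0 t_bound p s_large.
rewrite -(cat_take_drop (n - t) s) cat_path in p *; case/andP: p => p_take.
have size_take : size (take (n - t) s) = n - t by rewrite size_takel // ltnW.
rewrite (blade_path_short k_gt0 t_bound p_take) ?size_take // last_blade_run subnKC; last by lia.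
have : 0 < size (drop (n - t) s) by rewrite size_drop subn_gt0.
case: (drop _ _) => [//|y s'] _ /= /andP[/(edge_leave k_gt0) -> p'].
by exists s'.
Qed.

Lemma size_behead_Ccyc c : size (behead (Ccyc n c)) = n.
Proof. rewrite /= size_cat size_map size_iota /=; lia. Qed.

Lemma last_behead_Ccyc x c : last x (behead (Ccyc n c)) = 1.
Proof. by rewrite /= cats1 last_rcons. Qed.

Lemma hub_path_short s : path (edge m n) 1 s -> 0 < size s < n ->
  exists2 k, 1 <= k <= m & s = blade_run n k 2 (size s).
Proof.
case: s => [//|y s] /= /andP[/edge_from_hub[k k_bound ->] p] s_small.
exists k => //; rewrite blade_run_cons -blade_path_short //; lia.
Qed.

Lemma hub_path_cycle s : path (edge m n) 1 s -> n <= size s ->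
  exists2 c, 1 <= c <= m &
    exists2 s', s = behead (Ccyc n c) ++ s' & path (edge m n) 1 s'.
Proof.
case: s => [|y s] /=; first lia.
case/andP=> /edge_from_hub[c c_bound ->] p s_large.
have [|||s' -> p'] := blade_path_exit _ _ p; try lia.
exists c => //; exists s' => //.
have -> : iota 2 (n - 1) = 2 :: iota 3 (n - 2) by rewrite (_ : n - 1 = (n - 2).+1) //; lia.
by rewrite /= -catA.
Qed.

Lemma hub_path_to_blade r u s : 1 <= r -> 2 <= u <= n ->
  path (edge m n) 1 s -> last 1 s = blade_vertex n r u -> size s < n ->
  s = blade_run n r 2 (u - 1).
Proof.
move=> r_gt0 u_bound p; case: (posnP (size s)) => [/size0nil -> /= | s_gt0].
  by have := blade_vertex_ge n r u; lia.
move=> + s_small; have [|k k_bound ->] := hub_path_short p; first by rewrite s_gt0.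
case: (size s) s_gt0 s_small => // L _ L_small.
rewrite blade_run_cons /= last_blade_run.
case/blade_vertex_inj => [||||| -> <-]; try lia.
by rewrite (_ : 2 + L - 1 = L.+1) //; lia.
Qed.

Lemma blade_path_to_hub k t s : 1 <= k -> 2 <= t <= n ->
  path (edge m n) (blade_vertex n k t) s -> last (blade_vertex n k t) s = 1 ->
  n - t < size s.
Proof.
move=> k_gt0 t_bound p; rewrite ltnNge; apply: contra_eqN => s_small.
rewrite (blade_path_short k_gt0 t_bound p s_small) last_blade_run.
by have := blade_vertex_ge n k (t + size s); lia.
Qed.

Lemma blade_walk_through_hub k t s : 1 <= k -> 2 <= t <= n ->
  path (edge m n) (blade_vertex n k t) s -> size s = 2 * n - 1 ->
  exists2 c, 1 <= c <= m & exists2 s2,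
    s = blade_run n k t.+1 (n - t) ++ 1 :: behead (Ccyc n c) ++ s2 &
    path (edge m n) 1 s2 /\ size s2 = t - 2.
Proof.
move=> k_gt0 t_bound p s_size.
have [|s1 es p1] := blade_path_exit k_gt0 t_bound p; first lia.
have s1_size : size s1 = n + t - 2.
  by move: s_size; rewrite es size_cat size_blade_run /=; lia.
have [|c c_bound [s2 es1 p2]] := hub_path_cycle p1; first lia.
exists c => //; exists s2; first by rewrite es es1.
by split=> //; move: s1_size; rewrite es1 size_cat size_behead_Ccyc; lia.
Qed.

Lemma walk_from_to_cons i j s :
  path (edge m n) i s -> last i s = j -> walk_from_to m n (i :: s) i j.
Proof. by []. Qed.

Lemma walk_from_toP P i j : walk_from_to m n P i j ->
  exists2 s, P = i :: s & path (edge m n) i s /\ last i s = j.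
Proof. by case: P => [|v s] [//= p [<- l]]; exists s. Qed.

Lemma unique_walk_of_len_cons i j L s :
  path (edge m n) i s -> last i s = j -> size s = L ->
  (forall s', path (edge m n) i s' -> last i s' = j -> size s' = L -> s' = s) ->
  unique_walk_of_len m n (i :: s) i j L.
Proof.
move=> p l s_size uniq_s; split; first exact: walk_from_to_cons.
split=> // _ /walk_from_toP[s' -> [p' l']] s'_size.
by rewrite (uniq_s s').
Qed.

Lemma shortest_walk_cons i j s :
  path (edge m n) i s -> last i s = j ->
  (forall s', path (edge m n) i s' -> last i s' = j -> size s <= size s') ->
  shortest_walk m n (i :: s) i j.
Proof.
move=> p l min_s; split; first exact: walk_from_to_cons.
by move=> _ /walk_from_toP[s' -> [p' l']]; apply: min_s.
Qed.

Definition case_a i j P :=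
  i = 1 /\ (exists k, 1 <= k <= m /\ j = blade_vertex n k n) /\
  exists c, 1 <= c <= m /\
    exists P1j, unique_walk_of_len m n P1j 1 j (n - 1) /\ P = wcomp P1j (Ccyc n c).

Definition case_b i j P :=
  j = 1 /\ (exists k, 1 <= k <= m /\ i = blade_vertex n k 2) /\
  exists c, 1 <= c <= m /\
    exists Pi1, unique_walk_of_len m n Pi1 i 1 (n - 1) /\ P = wcomp (Ccyc n c) Pi1.

Definition case_c i j P :=
  (exists k r t, [/\ 1 <= k <= m, 1 <= r <= m, 3 <= t <= n,
      i = blade_vertex n k t & j = blade_vertex n r (t - 1)]) /\
  exists c, 1 <= c <= m /\
    exists Qi1 Q1j, [/\ shortest_walk m n Qi1 i 1, shortest_walk m n Q1j 1 j,
      unique_walk_of_len m n (wcomp Q1j Qi1) i j (n - 1) &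
      P = wcomp Q1j (wcomp (Ccyc n c) Qi1)].

Lemma hub_walk_case_a s : path (edge m n) 1 s -> size s = 2 * n - 1 ->
  case_a 1 (last 1 s) (1 :: s).
Proof.
move=> p s_size.
have [|c c_bound [s1 es p1]] := hub_path_cycle p; first lia.
have s1_size : size s1 = n - 1.
  by move: s_size; rewrite es size_cat size_behead_Ccyc; lia.
have [|r r_bound es1] := hub_path_short p1; first lia.
have last_s1 : last 1 s = last 1 s1 by rewrite es last_cat last_behead_Ccyc.
have last_s : last 1 s = blade_vertex n r n.
  by rewrite last_s1 es1 last_blade_run_gt0 s1_size; [congr blade_vertex|]; lia.
split=> //; split; first by exists r.
exists c; split=> //; exists (1 :: s1); split; last by rewrite es.
apply: unique_walk_of_len_cons => // s' p' l' s'_size.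
rewrite es1 s1_size; apply: hub_path_to_blade; rewrite ?l' //; lia.
Qed.

Lemma blade_walk_case_b k s : 1 <= k <= m ->
  path (edge m n) (blade_vertex n k 2) s -> size s = 2 * n - 1 ->
  case_b (blade_vertex n k 2) (last (blade_vertex n k 2) s) (blade_vertex n k 2 :: s).
Proof.
move=> k_bound p s_size.
have [||c c_bound [s2 es [_ /size0nil s2_nil]]] := blade_walk_through_hub _ _ p s_size; try lia.
rewrite es s2_nil cats0; split; first by rewrite last_cat /= last_behead_Ccyc.
split; first by exists k.
exists c; split=> //; exists (blade_vertex n k 2 :: blade_run n k 3 (n - 2) ++ [:: 1]).
split; last by rewrite /wcomp /= -catA.
apply: unique_walk_of_len_cons.
- by apply: prefix_path p; rewrite es cats1 -cat_rcons prefix_prefix.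
- by rewrite last_cat.
- by rewrite size_cat size_blade_run /=; lia.
move=> s' p' l' s'_size.
have [|||s'' es' _] := blade_path_exit _ _ p'; try lia.
suff /size0nil s''_nil : size s'' = 0 by rewrite es' s''_nil.
by move: s'_size; rewrite es' size_cat size_blade_run /=; lia.
Qed.

Lemma blade_walk_case_c k t s : 1 <= k <= m -> 3 <= t <= n ->
  path (edge m n) (blade_vertex n k t) s -> size s = 2 * n - 1 ->
  case_c (blade_vertex n k t) (last (blade_vertex n k t) s) (blade_vertex n k t :: s).
Proof.
move=> k_bound t_bound p s_size.
have [||c c_bound [s2 es [p2 s2_size]]] := blade_walk_through_hub _ _ p s_size; try lia.
have [|r r_bound es2] := hub_path_short p2; first lia.
have last_s2 : last 1 s2 = blade_vertex n r (t - 1).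
  by rewrite es2 last_blade_run_gt0 s2_size; [congr blade_vertex|]; lia.
have -> : last (blade_vertex n k t) s = blade_vertex n r (t - 1).
  by rewrite es last_cat /= last_cat last_behead_Ccyc.
have p_exit : path (edge m n) (blade_vertex n k t) (blade_run n k t.+1 (n - t) ++ [:: 1]).
  by apply: prefix_path p; rewrite es cats1 -cat_rcons prefix_prefix.
split; first by exists k, r, t; split.
exists c; split=> //.
exists (blade_vertex n k t :: blade_run n k t.+1 (n - t) ++ [:: 1]), (1 :: s2); split.
- apply: shortest_walk_cons => // [|s' p' l']; first by rewrite last_cat.
  by rewrite size_cat size_blade_run addn1 (blade_path_to_hub _ _ p' l'); lia.
- apply: shortest_walk_cons => // s' p' l'.
  case: (ltnP (size s') n) => [s'_small|]; last lia.
  by rewrite (hub_path_to_blade _ _ p' l' s'_small) ?size_blade_run; lia.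
- rewrite /wcomp /=; apply: unique_walk_of_len_cons.
  + by move: p_exit; rewrite -catA !cat_path /= andbT => /andP[-> ->].
  + by rewrite !last_cat.
  + by rewrite !size_cat size_blade_run /=; lia.
  move=> s' p' l' s'_size.
  have [|||s'' es' p''] := blade_path_exit _ _ p'; try lia.
  have s''_size : size s'' = t - 2.
    by move: s'_size; rewrite es' size_cat size_blade_run /=; lia.
  have l'' : last 1 s'' = blade_vertex n r (t - 1) by rewrite -l' es' last_cat.
  by rewrite es' -catA es2 s2_size (hub_path_to_blade _ _ p'' l'') ?s''_size -?subnDA //; lia.
- by rewrite /wcomp /= es -!catA.
Qed.

End Windmill.

Theorem lemma2p3 (m n i j : nat) (P : seq nat) :
  1 <= m -> 3 <= n -> inV m n i -> inV m n j ->
  walk_from_to m n P i j -> wlen P = 2 * n - 1 ->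
  exactly_one3
    (* (a) *)
    (i = 1 /\ (exists k, 1 <= k <= m /\ j = (k - 1) * (n - 1) + n) /\
     exists s, 1 <= s <= m /\
       exists P1j, unique_walk_of_len m n P1j 1 j (n - 1) /\ P = wcomp P1j (Ccyc n s))
    (* (b) *)
    (j = 1 /\ (exists k, 1 <= k <= m /\ i = (k - 1) * (n - 1) + 2) /\
     exists s, 1 <= s <= m /\
       exists Pi1, unique_walk_of_len m n Pi1 i 1 (n - 1) /\ P = wcomp (Ccyc n s) Pi1)
    (* (c) *)
    ((exists k r l, [/\ 1 <= k <= m, 1 <= r <= m, 3 <= l <= n,
        i = (k - 1) * (n - 1) + l & j = (r - 1) * (n - 1) + (l - 1)]) /\
     exists s, 1 <= s <= m /\
       exists Qi1 Q1j, [/\ shortest_walk m n Qi1 i 1, shortest_walk m n Q1j 1 j,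
         unique_walk_of_len m n (wcomp Q1j Qi1) i j (n - 1) &
         P = wcomp Q1j (wcomp (Ccyc n s) Qi1)]).
Proof.
(* 1 <= m, inV i and inV j are implied by the walk. *)
move=> _ n_ge3 _ _ /walk_from_toP[s -> [p <-]]; rewrite /wlen /= => s_size.
change (exactly_one3 (case_a m n i (last i s) (i :: s)) (case_b m n i (last i s) (i :: s))
  (case_c m n i (last i s) (i :: s))).
apply: (exactly_one3_by (b1 := i == 1) (b2 := last i s == 1)).
- by case=> ->.
- by case=> -> [[k [_ ->]] _]; rewrite blade_vertex_neq1.
- by case=> [[k [r [t [_ _ t_bound -> ->]]]] _]; rewrite !blade_vertex_neq1 //; lia.
have [|i1 | [k [t [k_bound t_bound ei]]]] := path_source n_ge3 _ p.
- by rewrite s_size; lia.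
- by left; rewrite i1 in p *; apply: hub_walk_case_a.
rewrite ei in p *; case: (ltnP 2 t) => [t_gt2 | t_le2]; [right; right | right; left].
  by apply: blade_walk_case_c => //; lia.
by rewrite (_ : t = 2) in p *; [apply: blade_walk_case_b | lia].
Qed.
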